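(* Let $\mu\in\mathcal{P}(\mathcal{X})$, $0<m_1\le m_2<\infty$, and tail functions $\alpha,\tilde\alpha$ with $\mu(B_{m_1})>0$ and $\alpha(r)>0$ for all $r>0$. Define \[ \tilde\beta(r):=\frac{1}{\mu(B_{m_1})}\sup_{a\ge r}\frac{\mu(B_a^{\mathsf c})}{\alpha(a)\wedge1}\ (r\ge m_1),\qquad \beta(r):=\frac{1}{\mu(B_{m_1})}\Big(\sup_{a\ge r}\frac{\mu(B_a^{\mathsf c})}{\tilde\alpha(a)}+\mu(B_r^{\mathsf c})\Big)\ (r\ge m_2). \] (i) For every $g\in\mathcal{G}^{\mu}_{\alpha,\tilde\alpha}$: $\int_{B_r^{\mathsf c}}g_-\,d\mu\le\tilde\beta(r)\int_{B_{m_1}}g\,d\mu$ for all $r\ge m_1$, and $\int_{B_r^{\mathsf c}}g_+\,d\mu\le\beta(r)\int_{B_{m_1}}g\,d\mu$ for all $r\ge m_2$. (ii) For every $f\in\mathcal{F}^{\mu,norm}_{\alpha,\tilde\alpha}$ and $g\in\mathcal{G}^{\mu,norm}_{\alpha,\tilde\alpha}$: \[ \int_{B_r^{\mathsf c}}|f|\,d\mu\le\alpha(r)+\tilde\alpha(r)\ (r\ge m_2),\qquad \int|f|\,d\mu\le1+2\tilde\alpha(m_2), \] \[ \int_{B_r^{\mathsf c}}|g|\,d\mu\le\frac{\tilde\beta(r)+\beta(r)}{1-\tilde\beta(m_1)}\ (r\ge m_2),\qquad \int|g|\,d\mu\le1+2\frac{\tilde\beta(m_1)}{1-\tilde\beta(m_1)}.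 \]
   Context: $\mathcal{X}$ is a Polish space with metric $d_{\mathcal{X}}$, $x_0$ fixed, $B_r=\{x:d_{\mathcal{X}}(x_0,x)\le r\}$, $B_r^{\mathsf c}=\mathcal{X}\setminus B_r$; $a\wedge b=\min\{a,b\}$; $f_+=\max\{f,0\}$, $f_-=-\min\{f,0\}$. A tail function is a non-increasing $\alpha:(0,\infty)\to[0,\infty)$ with $\lim_{r\to\infty}\alpha(r)=0$. $\mathcal{F}^{\mu}_{\alpha,\tilde\alpha}$ is the set of $f\in L^2(\mu)$ with $f\mathbf 1_{B_{m_2}}\ge0$ $\mu$-a.s., $\int_{B_r^{\mathsf c}}f_+\,d\mu\le\alpha(r)\int f\,d\mu$ for all $r\ge m_1$, $\int_{B_r^{\mathsf c}}f_-\,d\mu\le\tilde\alpha(r)\int f\,d\mu$ for all $r\ge m_2$; $\mathcal{G}^{\mu}_{\alpha,\tilde\alpha}=\{g\in L^2(\mu):\int fg\,d\mu\ge0\ \forall f\in\mathcal{F}^{\mu}_{\alpha,\tilde\alpha}\}$. $\mathcal{F}^{\mu,norm}_{\alpha,\tilde\alpha}=\{f\in\mathcal{F}^{\mu}_{\alpha,\tilde\alpha}:\int f\,d\mu=1\}$ and $\mathcal{G}^{\mu,norm}_{\alpha,\tilde\alpha}=\{g\in\mathcal{G}^{\mu}_{\alpha,\tilde\alpha}:\int g\,d\mu=1\}$. *)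

From HB Require Import structures.
From mathcomp Require Import all_boot all_order all_algebra.
From mathcomp Require Import all_classical all_reals all_analysis.
Set Implicit Arguments. Unset Strict Implicit. Unset Printing Implicit Defensive.
Import Order.TTheory GRing.Theory Num.Theory.
Import numFieldNormedType.Exports.
Local Open Scope classical_set_scope.
Local Open Scope ring_scope.

Section Defs.
Context {R : realType} {dsp : measure_display} {X : measurableType dsp}.

Definition is_metric (dist : X -> X -> R) : Prop :=
  [/\ forall x y, 0 <= dist x y,
      forall x y, dist x y = 0 <-> x = y,
      forall x y, dist x y = dist y x &
      forall x y z, dist x z <= dist x y + dist y z].

Definition metric_open (dist : X -> X -> R) (U : set X) : Prop :=
  forall x, U x -> exists2 e : R, 0 < e & [set y | dist x y < e] `<=` U.

Definition metric_complete (dist : X -> X -> R) : Prop :=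
  forall u : nat -> X,
    (forall e : R, 0 < e -> exists N : nat, forall n m, (N <= n)%N -> (N <= m)%N ->
        dist (u n) (u m) < e) ->
    exists l : X, forall e : R, 0 < e -> exists N : nat, forall n, (N <= n)%N ->
        dist (u n) l < e.

Definition metric_separable (dist : X -> X -> R) : Prop :=
  exists D : set X, countable D /\
    forall x (e : R), 0 < e -> exists2 y, D y & dist x y < e.

Definition polish_borel (dist : X -> X -> R) : Prop :=
  [/\ is_metric dist, metric_complete dist, metric_separable dist &
      (@measurable dsp X) = <<s [set U | metric_open dist U] >>].

Definition cball (dist : X -> X -> R) (x0 : X) (r : R) : set X :=
  [set x | dist x0 x <= r].

Definition tail_function (a : R -> R) : Prop :=
  [/\ (forall r s, 0 < r -> r <= s -> a s <= a r),
      (forall r, 0 < r -> 0 <= a r) &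
      a x @[x --> +oo] --> (0 : R)].

Definition fpos (f : X -> R) : X -> R := fun x => Num.max (f x) 0.
Definition fneg (f : X -> R) : X -> R := fun x => - Num.min (f x) 0.

Local Open Scope ereal_scope.

(** L^2(mu) (as functions; statements below are a.e.-invariant) *)
Definition L2 (mu : {measure set X -> \bar R}) (f : X -> R) : Prop :=
  measurable_fun setT f /\ \int[mu]_x (((f x) ^+ 2)%R)%:E < +oo.

Definition eint (mu : {measure set X -> \bar R}) (A : set X) (f : X -> R) : \bar R :=
  \int[mu]_(x in A) (f x)%:E.

Definition Fclass (dist : X -> X -> R) (x0 : X) (mu : {measure set X -> \bar R})
    (m1 m2 : R) (alpha alphat : R -> R) (f : X -> R) : Prop :=
  [/\ L2 mu f,
      {ae mu, forall x, cball dist x0 m2 x -> (0 <= f x)%R},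
      (forall r, (m1 <= r)%R ->
         eint mu (~` cball dist x0 r) (fpos f) <= (alpha r)%:E * eint mu setT f) &
      (forall r, (m2 <= r)%R ->
         eint mu (~` cball dist x0 r) (fneg f) <= (alphat r)%:E * eint mu setT f)].

Definition Gclass (dist : X -> X -> R) (x0 : X) (mu : {measure set X -> \bar R})
    (m1 m2 : R) (alpha alphat : R -> R) (g : X -> R) : Prop :=
  L2 mu g /\
  forall f, Fclass dist x0 mu m1 m2 alpha alphat f ->
    0 <= \int[mu]_x ((f x * g x)%R)%:E.

Definition Fnorm dist x0 mu m1 m2 alpha alphat (f : X -> R) : Prop :=
  Fclass dist x0 mu m1 m2 alpha alphat f /\ eint mu setT f = 1.

Definition Gnorm dist x0 mu m1 m2 alpha alphat (g : X -> R) : Prop :=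
  Gclass dist x0 mu m1 m2 alpha alphat g /\ eint mu setT g = 1.

(** extended-real quotient x / y for x >= 0, y >= 0 real, with the
    conventions c/0 = +oo for c > 0 and 0/0 = 0 *)
Definition equot (x : \bar R) (y : R) : \bar R :=
  if y == 0%R then (if x == 0 then 0 else +oo) else x * (y^-1)%:E.

Definition betat (dist : X -> X -> R) (x0 : X) (mu : {measure set X -> \bar R})
    (m1 : R) (alpha : R -> R) (r : R) : \bar R :=
  ((fine (mu (cball dist x0 m1)))^-1)%:E *
  ereal_sup [set y | exists2 a, (r <= a)%R &
                       y = equot (mu (~` cball dist x0 a)) (Num.min (alpha a) 1%R)].

Definition beta (dist : X -> X -> R) (x0 : X) (mu : {measure set X -> \bar R})
    (m1 : R) (alphat : R -> R) (r : R) : \bar R :=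
  ((fine (mu (cball dist x0 m1)))^-1)%:E *
  (ereal_sup [set y | exists2 a, (r <= a)%R &
                       y = equot (mu (~` cball dist x0 a)) (alphat a)]
   + mu (~` cball dist x0 r)).

End Defs.

(** Everything about [g] comes from pairing it with explicit members
    of [F].  For measurable [A] outside [B_r] (r >= m1) and [t >= 0], the function
    [1_{B_m1} + t 1_A] lies in [F] as soon as [t * c <= mu(B_m1)], where
    [mu(B_a^c) <= c alpha(a)] for all [a >= r]; for [A = {g < 0} \ B_r] the pairing
    [0 <= int (1_{B_m1} + t 1_A) g] reads [t int_{B_r^c} g_- <= int_{B_m1} g], and
    optimising over [t] gives the bound with [betat].  Symmetrically
    [1_{B_m1} - t 1_{{g > 0} \ B_r}] (r >= m2) controls [g_+] through [beta], and
    [1_{B_m1 /\ {g < 0}}] shows [g >= 0] on [B_m1].  The bounds on [f] are read off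
    the definition of [F] using [f = f_+ - f_-] and [f_- = 0] a.e. on [B_m2]; those
    on a normalised [g] follow from [1 = int g >= (1 - betat m1) int_{B_m1} g]. *)

From HB Require Import structures.
From mathcomp Require Import all_boot all_order all_algebra.
From mathcomp Require Import all_classical all_reals all_analysis.
From mathcomp Require Import ring lra measurable_realfun.
Import Order.TTheory GRing.Theory Num.Theory.
Import numFieldNormedType.Exports.
Set Implicit Arguments. Unset Strict Implicit. Unset Printing Implicit Defensive.
Local Open Scope classical_set_scope.
Local Open Scope ring_scope.

Section positive_and_negative_parts.
Context {R : realType} {d : measure_display} {X : measurableType d}.
Implicit Types (D A : set X) (h : X -> R).

Lemma fpos_ge0 h x : 0 <= fpos h x.
Proof. by rewrite /fpos le_max lexx orbT. Qed.

Lemma fneg_ge0 h x : 0 <= fneg h x.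
Proof. by rewrite /fneg oppr_ge0 ge_min lexx orbT. Qed.

Lemma ge0_fposE h x : 0 <= h x -> fpos h x = h x.
Proof. by move=> hx; rewrite /fpos max_l. Qed.

Lemma le0_fposE h x : h x <= 0 -> fpos h x = 0.
Proof. by move=> hx; rewrite /fpos max_r. Qed.

Lemma ge0_fnegE h x : 0 <= h x -> fneg h x = 0.
Proof. by move=> hx; rewrite /fneg min_r ?oppr0. Qed.

Lemma le0_fnegE h x : h x <= 0 -> fneg h x = - h x.
Proof. by move=> hx; rewrite /fneg min_l. Qed.

Lemma fpos_subr_fneg h x : fpos h x - fneg h x = h x.
Proof. by rewrite /fpos /fneg opprK; case: leP => _; rewrite ?addr0 ?add0r. Qed.

Lemma fpos_addr_fneg h x : fpos h x + fneg h x = `|h x|.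
Proof.
rewrite /fpos /fneg; case: leP => hx.
  by rewrite add0r ler0_norm.
by rewrite oppr0 addr0 gtr0_norm.
Qed.

Lemma fposE h : EFin \o fpos h = ((EFin \o h)^\+)%E.
Proof. by apply/funext => x; rewrite funeposE /= /fpos EFin_max. Qed.

Lemma fnegE h : EFin \o fneg h = ((EFin \o h)^\-)%E.
Proof. by apply/funext => x; rewrite funenegE /= /fneg oppr_min oppr0 EFin_max. Qed.

Lemma indic_ge0 A x : 0 <= \1_A x :> R.
Proof. by rewrite indicE; case: (_ \in _). Qed.

Lemma indic_le1 A x : \1_A x <= 1 :> R.
Proof. by rewrite indicE; case: (_ \in _). Qed.

Lemma indic_lt0M D h x : \1_(D `&` [set y | h y < 0]) x * h x = - (\1_D x * fneg h x).
Proof.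
rewrite indicI /= [\1_[set y | _] x]indicE; have [hx|hx] := ltP (h x) 0.
  by rewrite mem_set// le0_fnegE ?ltW// mulr1 mulrN opprK.
by rewrite memNset ?ge0_fnegE ?mulr0 ?mul0r ?oppr0//; apply/negP; rewrite -leNgt.
Qed.

Lemma indic_gt0M D h x : \1_(D `&` [set y | 0 < h y]) x * h x = \1_D x * fpos h x.
Proof.
rewrite indicI /= [\1_[set y | _] x]indicE; have [hx|hx] := ltP 0 (h x).
  by rewrite mem_set// ge0_fposE ?ltW// mulr1.
by rewrite memNset ?le0_fposE ?mulr0 ?mul0r//; apply/negP; rewrite -leNgt.
Qed.

Lemma measurable_ltr0 h : measurable_fun setT h -> measurable [set x | h x < 0].
Proof. by move=> mh; rewrite -preimage_itvNyo -[_ @^-1` _]setTI; exact: mh. Qed.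

Lemma measurable_gtr0 h : measurable_fun setT h -> measurable [set x | 0 < h x].
Proof. by move=> mh; rewrite -preimage_itvoy -[_ @^-1` _]setTI; exact: mh. Qed.

End positive_and_negative_parts.

Section finite_measure_integrals.
Context {R : realType} {d : measure_display} {X : measurableType d}.
Variable mu : {finite_measure set X -> \bar R}.
Implicit Types (D A : set X) (f h : X -> R).

Local Notation integrable f := (mu.-integrable setT (EFin \o f)).

Lemma integrable_bounded f (K : R) : measurable_fun setT f ->
  (forall x, `|f x| <= K) -> integrable f.
Proof.
move=> mf fK; apply: (le_integrable measurableT (g := EFin \o cst K)).
- exact/measurable_EFinP.
- by move=> x _ /=; rewrite lee_fin (le_trans (fK x)) ?ler_norm.
- exact: finite_measure_integrable_cst.
Qed.

Lemma integrable_L2 f : L2 mu f -> integrable f.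
Proof.
case=> mf f2; have mf2 : measurable_fun setT (fun x => f x ^+ 2).
  exact: measurable_funX.
apply: (le_integrable measurableT (g := EFin \o (fun x => 1 + f x ^+ 2))).
- exact/measurable_EFinP.
- move=> x _ /=; rewrite lee_fin [leRHS]ger0_norm ?addr_ge0 ?sqr_ge0//.
  rewrite -(real_normK (num_real (f x))); have := normr_ge0 (f x); nra.
- have i2 : integrable (fun x => f x ^+ 2).
    apply/integrableP; split; first exact/measurable_EFinP.
    by under eq_integral => x _ do rewrite /= ger0_norm ?sqr_ge0//.
  apply: (eq_integrable measurableT _ _ _ (integrableD measurableT
    (finite_measure_integrable_cst mu 1 measurableT) i2)) => x _.
  by rewrite /= EFinD.
Qed.

Lemma integrable_fpos h : integrable h -> integrable (fpos h).
Proof. by rewrite fposE; exact: integrable_funepos. Qed.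

Lemma integrable_fneg h : integrable h -> integrable (fneg h).
Proof. by rewrite fnegE; exact: integrable_funeneg. Qed.

Lemma measurable_integrable h : integrable h -> measurable_fun setT h.
Proof. by move/(measurable_int mu)/measurable_EFinP. Qed.

Lemma integrable_abs h : integrable h -> integrable (fun x => `|h x|).
Proof. by move/integrable_abse; apply: eq_integrable. Qed.

Lemma integrable_indicM D h : measurable D -> integrable h ->
  integrable (fun x => \1_D x * h x).
Proof.
move=> mD ih; have : mu.-integrable D (EFin \o h) by exact: integrableS ih.
move/(integrable_mkcond _ mD); rewrite restrict_EFin patch_indic.
by apply: eq_integrable => // x _ /=; rewrite mulrC.
Qed.

Lemma Rintegral_indicM D h :
  \int[mu]_x (\1_D x * h x) = \int[mu]_(x in D) h x.
Proof.
by rewrite [RHS]Rintegral_mkcond patch_indic; apply: eq_Rintegral => x _; rewrite mulrC.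
Qed.

Lemma Rintegral_indic D A : measurable D -> measurable A ->
  \int[mu]_(x in D) \1_A x = fine (mu (A `&` D)).
Proof. by move=> mD mA; rewrite /Rintegral integral_indic. Qed.

Lemma eint_Rintegral D h : measurable D -> integrable h ->
  eint mu D h = (\int[mu]_(x in D) h x)%:E.
Proof.
move=> mD ih; rewrite /Rintegral fineK//; apply: integrable_fin_num => //.
exact: integrableS ih.
Qed.

Lemma Rintegral_setUC D h : measurable D -> integrable h ->
  \int[mu]_x h x = \int[mu]_(x in D) h x + \int[mu]_(x in ~` D) h x.
Proof.
move=> mD ih; rewrite -Rintegral_setU ?setUv//; first exact: measurableC.
by rewrite /disj_set setICr.
Qed.

Lemma Rintegral_fposneg D h : measurable D -> integrable h ->
  \int[mu]_(x in D) h x = \int[mu]_(x in D) fpos h x - \int[mu]_(x in D) fneg h x.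
Proof.
move=> mD ih; rewrite -RintegralB//.
- by apply: eq_Rintegral => x _; rewrite fpos_subr_fneg.
- exact: integrableS (integrable_fpos ih).
- exact: integrableS (integrable_fneg ih).
Qed.

Lemma Rintegral_abs D h : measurable D -> integrable h ->
  \int[mu]_(x in D) `|h x| = \int[mu]_(x in D) fpos h x + \int[mu]_(x in D) fneg h x.
Proof.
move=> mD ih; rewrite -RintegralD//.
- by apply: eq_Rintegral => x _; rewrite fpos_addr_fneg.
- exact: integrableS (integrable_fpos ih).
- exact: integrableS (integrable_fneg ih).
Qed.

Lemma fine_measure_le A A' : measurable A -> measurable A' -> A `<=` A' ->
  fine (mu A) <= fine (mu A').
Proof.
move=> mA mA' AA'; rewrite fine_le ?fin_num_measure//.
by rewrite le_measure ?inE.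
Qed.

Lemma Rintegral_eq0 D h : (forall x, D x -> h x = 0) -> \int[mu]_(x in D) h x = 0.
Proof.
by move=> h0; rewrite /Rintegral (eq_integral (cst 0%E)) ?integral0// => x /[!inE] /h0 ->.
Qed.

Lemma integrableZl_EFin (t : R) h : integrable h -> integrable (fun x => t * h x).
Proof.
move=> ih; apply: (eq_integrable measurableT _ _ _ (integrableZl measurableT t ih)).
by move=> x _; rewrite /= EFinM.
Qed.

End finite_measure_integrals.

Lemma polish_borel_measurable_cball {R : realType} {d : measure_display}
    {X : measurableType d} (dist : X -> X -> R) x0 r :
  polish_borel dist -> measurable (cball dist x0 r).
Proof.
case=> -[_ _ dC dtri] _ _ mE; rewrite -(setCK (cball dist x0 r)).
apply: measurableC; rewrite mE; apply: sub_sigma_algebra => x /= /negP.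
rewrite -ltNge => rx.
exists (dist x0 x - r); first by rewrite subr_gt0.
move=> y /= xy; apply/negP; rewrite -ltNge.
by have := dtri x0 y x; rewrite (dC y x); lra.
Qed.

Lemma le_divr_mul_of_scaled {R : realFieldType} (I J c p : R) :
  0 < p -> 0 <= c -> 0 <= I -> (forall t, 0 <= t -> t * c <= p -> t * I <= J) ->
  I <= c / p * J.
Proof.
move=> p0 c0 I0 IJ.
have J0 : 0 <= J by have := IJ 0; rewrite !mul0r; apply => //; exact: ltW.
have [c_eq0|c_neq0] := eqVneq c 0.
  rewrite c_eq0 !mul0r leNgt; apply/negP => I_gt0.
  have := IJ ((J + 1) / I); rewrite c_eq0 mulr0 divfK ?gt_eqF//.
  by rewrite divr_ge0 ?addr_ge0 ?(ltW I_gt0)// => /(_ isT (ltW p0)); lra.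
have c_gt0 : 0 < c by rewrite lt_neqAle eq_sym c_neq0.
have := IJ (p / c); rewrite divfK ?gt_eqF// => /(_ _ (lexx p)).
rewrite divr_ge0 ?(ltW p0) ?(ltW c_gt0)// => /(_ isT) pIJ.
have -> : I = c / p * (p / c * I) by field; rewrite !gt_eqF.
by rewrite ler_wpM2l// divr_ge0// ltW.
Qed.

Section equot.
Context {R : realType}.
Local Open Scope ereal_scope.

Lemma equot_ge0 (x : \bar R) (y : R) : 0 <= x -> (0 <= y)%R -> 0 <= equot x y.
Proof.
rewrite /equot => x0 y0; case: eqP => _; first by case: eqP => _ //; rewrite leey.
by rewrite mule_ge0// lee_fin invr_ge0.
Qed.

Lemma equot_le (x : \bar R) (y c : R) : 0 <= x -> (0 <= y)%R ->
  equot x y <= c%:E -> x <= (c * y)%:E.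
Proof.
rewrite /equot => x0 y0; case: eqP => [->|/eqP y_neq0].
  by case: eqP => [-> _|_]; rewrite ?mulr0// leNgt ltey.
have y_gt0 : (0 < y)%R by rewrite lt_neqAle eq_sym y_neq0.
case: x x0 => [x| |] //= x0; last by rewrite mulyr gtr0_sg ?invr_gt0// mul1e leNgt ltey.
by rewrite -EFinM !lee_fin ler_pdivrMr.
Qed.

End equot.

Section tail_bounds.
Context {R : realType} {d : measure_display} {X : measurableType d}.
Variables (dist : X -> X -> R) (x0 : X) (mu : {finite_measure set X -> \bar R}).
Variables (m1 m2 : R) (alpha alphat : R -> R).
Hypothesis measurable_cball : forall r, measurable (cball dist x0 r).
Hypothesis m1_gt0 : 0 < m1.
Hypothesis m1_le_m2 : m1 <= m2.
Hypothesis tail_alpha : tail_function alpha.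
Hypothesis tail_alphat : tail_function alphat.
Hypothesis mu_cball_gt0 : (0 < mu (cball dist x0 m1))%E.

Implicit Types (f g h : X -> R) (A : set X).

Local Notation B := (cball dist x0).
Local Notation p := (fine (mu (B m1))).
Local Notation integrable f := (mu.-integrable setT (EFin \o f)).
Local Notation F := (Fclass dist x0 mu m1 m2 alpha alphat).
Local Notation G := (Gclass dist x0 mu m1 m2 alpha alphat).
Local Notation Fnorm := (Fnorm dist x0 mu m1 m2 alpha alphat).
Local Notation Gnorm := (Gnorm dist x0 mu m1 m2 alpha alphat).
Local Notation bt := (betat dist x0 mu m1 alpha).
Local Notation b := (beta dist x0 mu m1 alphat).

Let measurable_cballC r : measurable (~` B r).
Proof. exact: measurableC. Qed.

Let p_gt0 : 0 < p.
Proof. by rewrite -lte_fin fineK ?fin_num_measure. Qed.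

Let cball_le r s : r <= s -> B r `<=` B s.
Proof. by move=> rs x /= /le_trans; apply. Qed.

Lemma Fclass_bounded h (K : R) : measurable_fun setT h -> (forall x, `|h x| <= K) ->
  (forall x, B m2 x -> 0 <= h x) ->
  (forall r, m1 <= r -> \int[mu]_(x in ~` B r) fpos h x <= alpha r * \int[mu]_x h x) ->
  (forall r, m2 <= r -> \int[mu]_(x in ~` B r) fneg h x <= alphat r * \int[mu]_x h x) ->
  F h.
Proof.
move=> mh hK h_ge0 hpos hneg; have ih := integrable_bounded mu mh hK.
have ih2 : integrable (fun x => h x ^+ 2).
  apply: (integrable_bounded mu (K := K ^+ 2)); first exact: measurable_funX.
  move=> x; rewrite normrX lerXn2r ?nnegrE//; exact: le_trans (normr_ge0 _) (hK x).
split.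
- split => //; case/integrableP: ih2 => _.
  rewrite [X in (X < _)%E -> _](eq_integral (fun x => (h x ^+ 2)%:E))// => x _.
  by rewrite /= ger0_norm ?sqr_ge0.
- exact: aeW.
- by move=> r m1r; rewrite !eint_Rintegral// ?integrable_fpos// -EFinM lee_fin hpos.
- by move=> r m2r; rewrite !eint_Rintegral// ?integrable_fneg// -EFinM lee_fin hneg.
Qed.

Let alpha_ge0 r : m1 <= r -> 0 <= alpha r.
Proof. by case: tail_alpha => _ a_ge0 _ m1r; apply/a_ge0/(lt_le_trans m1_gt0). Qed.

Let alphat_ge0 r : m1 <= r -> 0 <= alphat r.
Proof. by case: tail_alphat => _ a_ge0 _ m1r; apply/a_ge0/(lt_le_trans m1_gt0). Qed.

Let indic_cball_out s x : m1 <= s -> (~` B s) x -> \1_(B m1) x = 0 :> R.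
Proof. by move=> m1s Bsx; rewrite indicE memNset// => /(cball_le m1s). Qed.

(* No integrability is needed: [fine] maps a non-finite integral to [0]. *)
Lemma Gclass_pairing_ge0 g h : G g -> F h -> 0 <= \int[mu]_x (h x * g x).
Proof. by case=> _ /[apply]; exact: fine_ge0. Qed.

Lemma measure_cballC_le beta A r s c : tail_function beta ->
  measurable A -> A `<=` ~` B r -> 0 < s -> 0 <= c ->
  (forall a, r <= a -> fine (mu (~` B a)) <= c * beta a) ->
  fine (mu (A `&` ~` B s)) <= c * beta s.
Proof.
case=> beta_le _ _ mA Ar s_gt0 c0 hc.
have r_le : r <= Num.max r s by rewrite le_max lexx.
have s_le : s <= Num.max r s by rewrite le_max lexx orbT.
apply: le_trans (fine_measure_le mu _ _ (_ : _ `<=` ~` B (Num.max r s))) _.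
- exact: measurableI.
- exact: measurable_cballC.
- by move=> x [/Ar + +]; rewrite /setC /cball /= le_max => ? ? /orP[].
apply: le_trans (hc _ r_le) _; rewrite ler_wpM2l// beta_le//.
Qed.

Lemma Fclass_indic A : measurable A -> A `<=` B m1 -> F (\1_A).
Proof.
move=> mA AB; apply: (Fclass_bounded (K := 1)).
- exact: measurable_indic.
- by move=> x; rewrite ger0_norm ?indic_ge0 ?indic_le1.
- by move=> x _; exact: indic_ge0.
- move=> r m1r; rewrite Rintegral_eq0 => [|x Brx]; last first.
    by rewrite ge0_fposE ?indic_ge0// indicE memNset// => /AB/(cball_le m1r).
  by rewrite mulr_ge0 ?alpha_ge0 ?Rintegral_ge0// => x _; exact: indic_ge0.
- move=> r m2r; rewrite Rintegral_eq0 => [|x _]; last by rewrite ge0_fnegE ?indic_ge0.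
  have m1r := le_trans m1_le_m2 m2r.
  by rewrite mulr_ge0 ?alphat_ge0 ?Rintegral_ge0// => x _; exact: indic_ge0.
Qed.

Lemma Fclass_cball_addr_indic A r t c : measurable A -> A `<=` ~` B r -> m1 <= r ->
  0 <= t -> 0 <= c -> t * c <= p ->
  (forall a, r <= a -> fine (mu (~` B a)) <= c * alpha a) ->
  F (fun x => \1_(B m1) x + t * \1_A x).
Proof.
move=> mA Ar m1r t0 c0 tcp hc; set h := fun x => _.
have h_ge0 x : 0 <= h x by rewrite addr_ge0 ?mulr_ge0 ?indic_ge0.
have int_h : p <= \int[mu]_x h x.
  rewrite RintegralD ?RintegralZl ?Rintegral_indic ?setIT//; last 3 first.
  - exact: integrable_indic.
  - exact: integrable_indic.
  - exact/integrableZl_EFin/integrable_indic.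
  by rewrite lerDl mulr_ge0// fine_ge0.
apply: (Fclass_bounded (K := 1 + t)).
- apply: measurable_funD; [|apply: measurable_funM] => //; exact: measurable_indic.
- move=> x; rewrite ger0_norm// lerD ?indic_le1// ler_piMr ?indic_le1//.
- by move=> x _.
- move=> s m1s; have s_gt0 := lt_le_trans m1_gt0 m1s.
  rewrite (eq_Rintegral mu (g := fun x => t * \1_A x)) => [|x /[!inE] Bsx]; last first.
    by rewrite ge0_fposE// /h (indic_cball_out m1s Bsx) add0r.
  rewrite RintegralZl ?Rintegral_indic//; last exact: integrableS (integrable_indic _ mA).
  have := measure_cballC_le tail_alpha mA Ar s_gt0 c0 hc.
  have := alpha_ge0 m1s; have := fine_ge0 (measure_ge0 mu (A `&` ~` B s)); nra.
- move=> s m2s; rewrite Rintegral_eq0 => [|x _]; last by rewrite ge0_fnegE.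
  by rewrite mulr_ge0 ?alphat_ge0 ?(le_trans m1_le_m2)// (le_trans (ltW p_gt0)).
Qed.

Lemma Fclass_cball_subr_indic A r t c : measurable A -> A `<=` ~` B r -> m2 <= r ->
  0 <= t -> 0 <= c -> t * (c + fine (mu (~` B r))) <= p ->
  (forall a, r <= a -> fine (mu (~` B a)) <= c * alphat a) ->
  F (fun x => \1_(B m1) x - t * \1_A x).
Proof.
move=> mA Ar m2r t0 c0 tcp hc; set h := fun x => _.
have m1r := le_trans m1_le_m2 m2r.
have muA : fine (mu A) <= fine (mu (~` B r)) by exact: fine_measure_le.
have int_h : p - t * fine (mu (~` B r)) <= \int[mu]_x h x.
  rewrite RintegralB ?RintegralZl ?Rintegral_indic ?setIT//; last 3 first.
  - exact: integrable_indic.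
  - exact: integrable_indic.
  - exact/integrableZl_EFin/integrable_indic.
  by rewrite lerD2l lerN2 ler_wpM2l.
have c_le : 0 <= p - t * fine (mu (~` B r)) by nra.
have h_out s x : m1 <= s -> (~` B s) x -> h x = - (t * \1_A x).
  by move=> m1s Bsx; rewrite /h (indic_cball_out m1s Bsx) sub0r.
apply: (Fclass_bounded (K := 1 + t)).
- apply: measurable_funB; [|apply: measurable_funM] => //; exact: measurable_indic.
- move=> x; rewrite ler_norml /h !indicE.
  by case: (_ \in _); case: (_ \in _); rewrite /= ?mulr0 ?mulr1; apply/andP; split; lra.
- move=> x Bx; rewrite /h [\1_A x]indicE (memNset (_ : ~ A x)) ?mulr0 ?subr0 ?indic_ge0//.
  by move=> /Ar; apply; exact: cball_le Bx.
- move=> s m1s; rewrite Rintegral_eq0 => [|x Bsx]; last first.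
    by rewrite le0_fposE// (h_out s x m1s Bsx) oppr_le0 mulr_ge0 ?indic_ge0.
  by rewrite mulr_ge0 ?alpha_ge0// (le_trans c_le).
- move=> s m2s; have m1s := le_trans m1_le_m2 m2s; have s_gt0 := lt_le_trans m1_gt0 m1s.
  rewrite (eq_Rintegral mu (g := fun x => t * \1_A x)) => [|x /[!inE] Bsx]; last first.
    by rewrite le0_fnegE (h_out s x m1s Bsx) ?opprK// oppr_le0 mulr_ge0 ?indic_ge0.
  rewrite RintegralZl ?Rintegral_indic//; last exact: integrableS (integrable_indic _ mA).
  have := measure_cballC_le tail_alphat mA Ar s_gt0 c0 hc.
  have := alphat_ge0 m1s; have := fine_ge0 (measure_ge0 mu (A `&` ~` B s)); nra.
Qed.

Lemma Gclass_Rintegral_fneg_cball g : G g -> \int[mu]_(x in B m1) fneg g x = 0.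
Proof.
move=> Gg; have ig := integrable_L2 Gg.1.
have mA : measurable (B m1 `&` [set x | g x < 0]).
  exact/measurableI/measurable_ltr0/(measurable_integrable ig).
have := Gclass_pairing_ge0 Gg (Fclass_indic mA (@subIsetl _ _ _)).
under eq_Rintegral do rewrite indic_lt0M -mulN1r.
rewrite RintegralZl ?Rintegral_indicM//; last exact/integrable_indicM/integrable_fneg.
rewrite mulN1r oppr_ge0 => neg_le0; apply/le_anti; rewrite neg_le0 /=.
by apply: Rintegral_ge0 => x _; exact: fneg_ge0.
Qed.

Lemma Gclass_fneg_tail g r c : G g -> m1 <= r -> 0 <= c ->
  (forall a, r <= a -> fine (mu (~` B a)) <= c * alpha a) ->
  \int[mu]_(x in ~` B r) fneg g x <= c / p * \int[mu]_(x in B m1) g x.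
Proof.
move=> Gg m1r c0 hc; have ig := integrable_L2 Gg.1.
have mA : measurable (~` B r `&` [set x | g x < 0]).
  exact/measurableI/measurable_ltr0/(measurable_integrable ig).
apply: le_divr_mul_of_scaled => // [|t t0 tcp].
  by apply: Rintegral_ge0 => x _; exact: fneg_ge0.
have := Gclass_pairing_ge0 Gg
  (Fclass_cball_addr_indic mA (@subIsetl _ _ _) m1r t0 c0 tcp hc).
under eq_Rintegral do rewrite mulrDl -mulrA indic_lt0M mulrN.
rewrite RintegralB ?RintegralZl ?Rintegral_indicM ?subr_ge0//.
- exact/integrable_indicM/integrable_fneg.
- exact: integrable_indicM.
- exact/integrableZl_EFin/integrable_indicM/integrable_fneg.
Qed.

Lemma Gclass_fpos_tail g r c : G g -> m2 <= r -> 0 <= c ->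
  (forall a, r <= a -> fine (mu (~` B a)) <= c * alphat a) ->
  \int[mu]_(x in ~` B r) fpos g x
    <= (c + fine (mu (~` B r))) / p * \int[mu]_(x in B m1) g x.
Proof.
move=> Gg m2r c0 hc; have ig := integrable_L2 Gg.1.
have mA : measurable (~` B r `&` [set x | 0 < g x]).
  exact/measurableI/measurable_gtr0/(measurable_integrable ig).
apply: le_divr_mul_of_scaled => // [||t t0 tcp].
- by rewrite addr_ge0// fine_ge0.
- by apply: Rintegral_ge0 => x _; exact: fpos_ge0.
have := Gclass_pairing_ge0 Gg
  (Fclass_cball_subr_indic mA (@subIsetl _ _ _) m2r t0 c0 tcp hc).
under eq_Rintegral do rewrite mulrBl -mulrA indic_gt0M.
rewrite RintegralB ?RintegralZl ?Rintegral_indicM ?subr_ge0//.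
- exact/integrable_indicM/integrable_fpos.
- exact: integrable_indicM.
- exact/integrableZl_EFin/integrable_indicM/integrable_fpos.
Qed.

Lemma ereal_sup_equot_fin (w : R -> R) r : (forall a, r <= a -> 0 <= w a) ->
  let S := [set y | exists2 a, r <= a & y = equot (mu (~` B a)) (w a)] in
  (ereal_sup S < +oo)%E ->
  exists2 c, ereal_sup S = c%:E &
    0 <= c /\ forall a, r <= a -> fine (mu (~` B a)) <= c * w a.
Proof.
move=> w_ge0 S; have Sa a : r <= a -> S (equot (mu (~` B a)) (w a)) by exists a.
have sup_ge0 : (0 <= ereal_sup S)%E.
  apply: le_trans (ereal_sup_ubound (Sa _ (lexx r))).
  exact: equot_ge0 (measure_ge0 _ _) (w_ge0 _ (lexx r)).
case E: (ereal_sup S) sup_ge0 => [c| |]// c0 _; exists c => //; split => // a ra.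
have := ereal_sup_ubound (Sa _ ra); rewrite E => /equot_le.
move=> /(_ (measure_ge0 _ _) (w_ge0 _ ra)).
by rewrite -lee_fin fineK ?fin_num_measure.
Qed.

Let invp_mulr_pinfty : (((p^-1)%:E * +oo)%E = +oo)%E.
Proof. by rewrite mulry gtr0_sg ?invr_gt0// mul1e. Qed.

Lemma betat_fin r : m1 <= r -> (bt r < +oo)%E ->
  exists2 c, bt r = (c / p)%:E &
    0 <= c /\ forall a, r <= a -> fine (mu (~` B a)) <= c * alpha a.
Proof.
move=> m1r; have w_ge0 a : r <= a -> 0 <= Num.min (alpha a) 1.
  by move=> ra; rewrite le_min ler01 andbT alpha_ge0// (le_trans m1r ra).
have /= := ereal_sup_equot_fin w_ge0; rewrite /betat; move: (ereal_sup _) => e.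
case: e => [e| |] /=.
- move=> /(_ (ltry e)) [c [->] [c0 hc]] _; exists c; first by rewrite -EFinM mulrC.
  by split => // a ra; apply: le_trans (hc a ra) _; rewrite ler_wpM2l// ge_min lexx.
- by rewrite invp_mulr_pinfty.
- by move=> /(_ isT) [].
Qed.

Lemma beta_fin r : m2 <= r -> (b r < +oo)%E ->
  exists2 c, b r = ((c + fine (mu (~` B r))) / p)%:E &
    0 <= c /\ forall a, r <= a -> fine (mu (~` B a)) <= c * alphat a.
Proof.
move=> m2r; have w_ge0 a : r <= a -> 0 <= alphat a.
  by move=> ra; rewrite alphat_ge0// (le_trans m1_le_m2 (le_trans m2r ra)).
have muE : mu (~` B r) = (fine (mu (~` B r)))%:E by rewrite fineK ?fin_num_measure.
have /= := ereal_sup_equot_fin w_ge0; rewrite /beta; move: (ereal_sup _) => e.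
case: e => [e| |] /=.
- move=> /(_ (ltry e)) [c [->] hc] _; exists c => //.
  by rewrite {1}muE -EFinD -EFinM mulrC.
- by rewrite muE addye// invp_mulr_pinfty.
- by move=> /(_ isT) [].
Qed.

Lemma betat_le r s : r <= s -> (bt s <= bt r)%E.
Proof.
move=> rs; rewrite /betat lee_wpmul2l ?lee_fin ?invr_ge0 ?fine_ge0//.
by apply: ereal_sup_le => _ [a sa ->]; exists a => //; exact: le_trans sa.
Qed.

Lemma Gclass_betat g r : G g -> m1 <= r -> (bt r < +oo)%E ->
  (eint mu (~` B r) (fneg g) <= bt r * eint mu (B m1) g)%E.
Proof.
move=> Gg m1r /(betat_fin m1r) [c -> [c0 hc]]; have ig := integrable_L2 Gg.1.
by rewrite !eint_Rintegral ?integrable_fneg// -EFinM lee_fin Gclass_fneg_tail.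
Qed.

Lemma Gclass_beta g r : G g -> m2 <= r -> (b r < +oo)%E ->
  (eint mu (~` B r) (fpos g) <= b r * eint mu (B m1) g)%E.
Proof.
move=> Gg m2r /(beta_fin m2r) [c -> [c0 hc]]; have ig := integrable_L2 Gg.1.
by rewrite !eint_Rintegral ?integrable_fpos// -EFinM lee_fin Gclass_fpos_tail.
Qed.

Lemma Fclass_fpos_tail f r : F f -> m1 <= r ->
  \int[mu]_(x in ~` B r) fpos f x <= alpha r * \int[mu]_x f x.
Proof.
case=> /integrable_L2 i_f _ hpos _ /hpos.
by rewrite !eint_Rintegral ?integrable_fpos// -EFinM lee_fin.
Qed.

Lemma Fclass_fneg_tail f r : F f -> m2 <= r ->
  \int[mu]_(x in ~` B r) fneg f x <= alphat r * \int[mu]_x f x.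
Proof.
case=> /integrable_L2 i_f _ _ hneg /hneg.
by rewrite !eint_Rintegral ?integrable_fneg// -EFinM lee_fin.
Qed.

Lemma Fclass_Rintegral_fneg_cball f : F f -> \int[mu]_(x in B m2) fneg f x = 0.
Proof.
case=> /integrable_L2 i_f f_ge0 _ _.
rewrite /Rintegral (ae_eq_integral (cst 0%E)) ?integral0//.
- exact: measurable_funS (measurable_int mu (integrable_fneg i_f)).
- apply: filterS f_ge0 => x f_ge0 Bx; rewrite /= ge0_fnegE//; exact: f_ge0.
Qed.

Lemma Fnorm_abs_tail f r : Fnorm f -> m2 <= r ->
  (eint mu (~` B r) (fun x => `|f x|%R) <= (alpha r + alphat r)%:E)%E.
Proof.
case=> Ff; case: (Ff) => /integrable_L2 i_f _ _ _.
rewrite eint_Rintegral// => -[int_f1] m2r.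
rewrite eint_Rintegral ?integrable_abs// Rintegral_abs// lee_fin.
have := Fclass_fpos_tail Ff (le_trans m1_le_m2 m2r).
have := Fclass_fneg_tail Ff m2r.
rewrite int_f1; lra.
Qed.

Lemma Fnorm_abs f : Fnorm f ->
  (eint mu setT (fun x => `|f x|%R) <= (1 + 2 * alphat m2)%:E)%E.
Proof.
case=> Ff; case: (Ff) => /integrable_L2 i_f _ _ _.
rewrite eint_Rintegral// => -[int_f1].
rewrite eint_Rintegral ?integrable_abs// Rintegral_abs// lee_fin.
have := Rintegral_fposneg measurableT i_f.
have := Rintegral_setUC (measurable_cball m2) (integrable_fneg i_f).
have := Fclass_fneg_tail Ff (lexx m2).
rewrite Fclass_Rintegral_fneg_cball// int_f1; lra.
Qed.

Lemma Gnorm_Rintegral_cball_le g : Gnorm g -> (bt m1 < 1)%E ->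
  \int[mu]_(x in B m1) g x <= (1 - fine (bt m1))^-1.
Proof.
case=> Gg; have ig := integrable_L2 Gg.1; rewrite eint_Rintegral// => -[int_g1] bt1.
have [c bt1E [c0 hc]] := betat_fin (lexx m1) (lt_trans bt1 (ltry 1)).
move: bt1; rewrite bt1E lte_fin /= => q_lt1.
rewrite -[leRHS]mul1r ler_pdivlMr ?subr_gt0//.
have := Gclass_fneg_tail Gg (lexx m1) c0 hc.
have := Rintegral_setUC (measurable_cball m1) ig.
have := Rintegral_fposneg (measurable_cballC m1) ig.
have : 0 <= \int[mu]_(x in ~` B m1) fpos g x.
  by apply: Rintegral_ge0 => x _; exact: fpos_ge0.
rewrite int_g1 mulrBr mulr1 mulrC; lra.
Qed.

Lemma Gnorm_abs_tail g r : Gnorm g -> (bt m1 < 1)%E -> m2 <= r ->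
  (eint mu (~` B r) (fun x => `|g x|%R) <= (bt r + b r) * ((1 - fine (bt m1))^-1)%:E)%E.
Proof.
move=> Gng bt1 m2r; have [Gg _] := Gng; have ig := integrable_L2 Gg.1.
have m1r := le_trans m1_le_m2 m2r.
have [c bt1E [c0 hc]] := betat_fin (lexx m1) (lt_trans bt1 (ltry 1)).
have q_gt0 : 0 < 1 - fine (bt m1) by move: bt1; rewrite bt1E lte_fin subr_gt0.
have bt_fin : (bt m1 < +oo)%E by exact: lt_trans bt1 (ltry 1).
have [c' btrE [c'0 hc']] := betat_fin m1r (le_lt_trans (betat_le m1r) bt_fin).
have [br_fin|] := ltP (b r) +oo%E; last first.
  rewrite leye_eq => /eqP ->; rewrite btrE addey// mulyr gtr0_sg ?invr_gt0//.
  by rewrite mul1e leey.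
have [c'' brE [c''0 hc'']] := beta_fin m2r br_fin.
rewrite btrE brE eint_Rintegral ?integrable_abs// Rintegral_abs// -EFinD -EFinM lee_fin.
have := Gclass_fneg_tail Gg m1r c'0 hc'.
have := Gclass_fpos_tail Gg m2r c''0 hc''.
move=> hpos hneg; apply: le_trans (_ : _ <= (c' / p + (c'' + fine (mu (~` B r))) / p)
  * \int[mu]_(x in B m1) g x) _; first by rewrite mulrDl; lra.
rewrite ler_wpM2l ?Gnorm_Rintegral_cball_le// addr_ge0 ?divr_ge0 ?addr_ge0 ?fine_ge0//.
all: exact: ltW.
Qed.

Lemma Gnorm_abs g : Gnorm g -> (bt m1 < 1)%E ->
  (eint mu setT (fun x => `|g x|%R)
    <= (1 + 2 * (fine (bt m1) / (1 - fine (bt m1))))%:E)%E.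
Proof.
move=> Gng bt1; have [Gg] := Gng; have ig := integrable_L2 Gg.1.
rewrite eint_Rintegral// => -[int_g1].
have [c bt1E [c0 hc]] := betat_fin (lexx m1) (lt_trans bt1 (ltry 1)).
have q_ge0 : 0 <= fine (bt m1) by rewrite bt1E /= divr_ge0// ltW.
have /(ler_wpM2l q_ge0) := Gnorm_Rintegral_cball_le Gng bt1.
rewrite eint_Rintegral ?integrable_abs// Rintegral_abs// lee_fin.
have := Rintegral_fposneg measurableT ig.
have := Rintegral_setUC (measurable_cball m1) (integrable_fneg ig).
have := Gclass_fneg_tail Gg (lexx m1) c0 hc.
rewrite Gclass_Rintegral_fneg_cball// int_g1 bt1E /=; lra.
Qed.

End tail_bounds.

Unset Implicit Arguments. Set Strict Implicit.
Local Open Scope ereal_scope.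

Theorem lemma3p4 (R : realType) (d : measure_display) (X : measurableType d)
  (dist : X -> X -> R) (x0 : X) (mu : probability X R) (m1 m2 : R)
  (alpha alphat : R -> R) :
  polish_borel dist ->
  (0 < m1)%R -> (m1 <= m2)%R ->
  tail_function alpha -> tail_function alphat ->
  0 < mu (cball dist x0 m1) ->
  (forall r : R, (0 < r)%R -> (0 < alpha r)%R) ->
  let B := cball dist x0 in
  let bt := betat dist x0 mu m1 alpha in
  let b := beta dist x0 mu m1 alphat in
  (* (i) *)
  (forall g, Gclass dist x0 mu m1 m2 alpha alphat g ->
     (forall r, (m1 <= r)%R -> bt r < +oo ->
        eint mu (~` B r) (fneg g) <= bt r * eint mu (B m1) g) /\
     (forall r, (m2 <= r)%R -> b r < +oo ->
        eint mu (~` B r) (fpos g) <= b r * eint mu (B m1) g)) /\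
  (* (ii), f part *)
  (forall f, Fnorm dist x0 mu m1 m2 alpha alphat f ->
     (forall r, (m2 <= r)%R ->
        eint mu (~` B r) (fun x => `|f x|%R) <= (alpha r + alphat r)%:E) /\
     eint mu setT (fun x => `|f x|%R) <= (1 + 2 * alphat m2)%:E) /\
  (* (ii), g part *)
  (forall g, Gnorm dist x0 mu m1 m2 alpha alphat g ->
     bt m1 < 1 ->
     (forall r, (m2 <= r)%R ->
        eint mu (~` B r) (fun x => `|g x|%R)
          <= (bt r + b r) * ((1 - fine (bt m1))^-1)%:E) /\
     eint mu setT (fun x => `|g x|%R)
       <= (1 + 2 * (fine (bt m1) / (1 - fine (bt m1))))%:E).
Proof.
move=> pb m1_gt0 m12 ta tat mu_gt0 _ B bt b.
have mB r : measurable (B r) by exact: polish_borel_measurable_cball.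
split; [|split].
- move=> g Gg; split=> r.
  + exact: (Gclass_betat (m2 := m2) (alphat := alphat)).
  + exact: (Gclass_beta (alpha := alpha)).
- move=> f Ff; split=> [r|].
  + exact: (Fnorm_abs_tail (m1 := m1)).
  + exact: (Fnorm_abs (dist := dist) (x0 := x0) (m1 := m1) (alpha := alpha)).
- move=> g Gg bt1; split=> [r|].
  + exact: Gnorm_abs_tail.
  + exact: (Gnorm_abs (m2 := m2) (alphat := alphat)).
Qed.
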